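(* Let $n$ be a positive integer with $n\notin\{4,8,12\}$. Then there does not exist any product design $PD\big(n;\ 1_{(3)};\ 1_{(3)};\ n-3\big)$, i.e. there is no product design $(M_1;M_2;N)$ of order $n$ in which $M_1$ and $M_2$ are each orthogonal designs of type $(1,1,1)$ and $N$ is an orthogonal design of type $(n-3)$.
   Context: An orthogonal design $OD(n;\ c_1,\ldots,c_k)$ is a square matrix $C$ of order $n$ with entries from $\{0,\pm x_1,\ldots,\pm x_k\}$, where $x_1,\ldots,x_k$ are commuting indeterminates, such that $CC^{\rm T}=\big(\sum_{j=1}^k c_jx_j^2\big)I_n$; $(c_1,\ldots,c_k)$ is its type. The notation $u_{(k)}$ in a type means that $u$ is repeated $k$ times. For matrices $A=[a_{ij}]$, $B=[b_{ij}]$ of the same size, the Hadamard product is $A*B=[a_{ij}b_{ij}]$, and $\mathbf 0$ is the zero matrix. A product design $PD\big(n;\ a_1,\ldots,a_r;\ b_1,\ldots,b_s;\ u_1,\ldots,u_t\big)$ is a triple $(M_1;M_2;N)$ where $M_1$, $M_2$, $N$ are orthogonal designs of order $n$ and types $(a_1,\ldots,a_r)$, $(b_1,\ldots,b_s)$, $(u_1,\ldots,u_t)$ respectively, such that (i) $M_1*N=M_2*N=\mathbf 0$; (ii) $M_1+N$ and $M_2+N$ are orthogonal designs; (iii) $M_1M_2^{\rm T}=M_2M_1^{\rm T}$. *)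

From HB Require Import structures.
From mathcomp Require Import all_boot all_order all_algebra.
Set Implicit Arguments. Unset Strict Implicit. Unset Printing Implicit Defensive.
Import Order.TTheory GRing.Theory Num.Theory.
Local Open Scope ring_scope.

(* A formal entry of a design with variables indexed by V:
   None = 0, Some (false, v) = + x_v, Some (true, v) = - x_v. *)
Definition entry (V : Type) := option (bool * V).

Definition ev (V : Type) (x : V -> int) (e : entry V) : int :=
  match e with
  | None => 0
  | Some (b, v) => if b then - x v else x v
  end.

Definition evmx (n : nat) (V : Type) (x : V -> int) (D : 'M[entry V]_n) : 'M[int]_n :=
  \matrix_(i, j) ev x (D i j).

(* D is an orthogonal design OD(n; (c v)_v): D D^T = (sum_v c_v x_v^2) I_n
   as a polynomial identity in the commuting indeterminates x_v, expressed
   as equality for every integer substitution (equivalent, as Z is infinite). *)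
Definition is_OD (n : nat) (V : finType) (c : V -> int) (D : 'M[entry V]_n) : Prop :=
  forall x : V -> int,
    evmx x D *m (evmx x D)^T = (\sum_(v : V) c v * x v ^+ 2)%:M.

Definition hadamard_zero (n : nat) (V W : Type) (A : 'M[entry V]_n) (B : 'M[entry W]_n) : Prop :=
  forall i j, A i j = None \/ B i j = None.

(* Formal sum A + B of designs in disjoint sets of indeterminates
   (meaningful when the supports are disjoint). *)
Definition mx_join (n : nat) (V W : Type) (A : 'M[entry V]_n) (B : 'M[entry W]_n)
  : 'M[entry (V + W)]_n :=
  \matrix_(i, j)
    match A i j with
    | Some (b, v) => Some (b, inl v)
    | None => match B i j with
              | Some (b, w) => Some (b, inr w)
              | None => None
              end
    end.

Definition type_join (V W : Type) (c : V -> int) (d : W -> int) (s : V + W) : int :=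
  match s with inl v => c v | inr w => d w end.

Definition is_PD (n : nat) (V1 V2 V3 : finType)
  (a : V1 -> int) (b : V2 -> int) (u : V3 -> int)
  (M1 : 'M[entry V1]_n) (M2 : 'M[entry V2]_n) (N : 'M[entry V3]_n) : Prop :=
  is_OD a M1 /\ is_OD b M2 /\ is_OD u N /\
  hadamard_zero M1 N /\ hadamard_zero M2 N /\
  is_OD (type_join a u) (mx_join M1 N) /\ is_OD (type_join b u) (mx_join M2 N) /\
  (forall (x : V1 -> int) (y : V2 -> int),
      evmx x M1 *m (evmx y M2)^T = evmx y M2 *m (evmx x M1)^T).

(* Evaluating M1 at the three unit vectors, M2 at one of them and N at the all-ones vector
   gives signed permutation matrices A0, A1, A2, B and a {0,+-1}-matrix C with
   C C^T = (n - 3) I, pairwise amicable or anti-amicable as dictated by the product design.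
   After right multiplication by A0^T, A1 and A2 are skew, B is symmetric and C is skew.
   The permutations s1, s2, t underlying A1, A2, B are involutions; s1 and s2 are fixed-point
   free, commute and never agree, and the anti-amicability of C with A1, A2 and B forces row x
   of C to vanish at x, s1 x, s2 x and t x.  Since C has exactly n - 3 nonzero entries per row,
   t x is one of x, s1 x, s2 x.  Comparing signs of entries shows that two points at which t
   acts by the same one of id, s1, s2 lie in the same orbit of the Klein group <s1, s2>, which
   has size 4; as there are three choices, n is 0, 4, 8 or 12. *)

From HB Require Import structures.
From mathcomp Require Import all_boot all_order all_algebra.
From mathcomp Require Import zify ring.
Import Order.TTheory GRing.Theory Num.Theory.
Set Implicit Arguments. Unset Strict Implicit. Unset Printing Implicit Defensive.

Lemma card_uniform_fibres (T K : finType) (f : T -> K) d :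
  (forall x, #|[set y | f y == f x]| = d) -> #|T| = #|f @: T| * d.
Proof.
move=> fibre_d; rewrite -[#|T|]sum1_card (partition_big_imset f) -sum_nat_const.
apply: eq_bigr => _ /imsetP[x _ ->]; rewrite -(fibre_d x) -sum1_card.
by apply: eq_bigl => y; rewrite inE.
Qed.

Section KleinOrbits.

Variables (T : finType) (s1 s2 t : T -> T).
Hypotheses (s1K : involutive s1) (s2K : involutive s2).
Hypothesis s12C : forall x, s1 (s2 x) = s2 (s1 x).
Hypotheses (s1_neq : forall x, s1 x != x) (s2_neq : forall x, s2 x != x).
Hypothesis s12_neq : forall x, s1 x != s2 x.

Definition klein_row x := [:: x; s1 x; s2 x].
Definition klein_orbit x := [:: x; s1 x; s2 x; s1 (s2 x)].

Lemma uniq_klein_orbit x : uniq (klein_orbit x).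
Proof.
rewrite /= !inE !negb_or -!andbA (eq_sym x (s2 x)) (eq_sym x (s1 (s2 x))).
rewrite (eq_sym (s2 x)) (inj_eq (can_inj s1K)) (can2_eq s1K s1K).
by rewrite eq_sym s1_neq eq_sym s2_neq eq_sym s12_neq eq_sym s1_neq.
Qed.

Lemma uniq_klein_row x : uniq (klein_row x).
Proof. by rewrite /= !inE negb_or (eq_sym x (s1 x)) (eq_sym x (s2 x)) s1_neq s2_neq s12_neq. Qed.

Lemma klein_row_orbit x y z : y \in klein_row x -> y \in klein_row z -> z \in klein_orbit x.
Proof.
have row_sym a b : a \in klein_row b -> b \in klein_row a.
  by rewrite !inE => /or3P[]/eqP->; rewrite ?s1K ?s2K eqxx ?orbT.
move=> yx /row_sym; move: yx; rewrite !inE => /or3P[]/eqP-> /or3P[]/eqP->;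
  by rewrite ?s1K ?s2K -?s12C eqxx ?orbT.
Qed.

Hypothesis t_row : forall x, t x \in klein_row x.
Hypotheses (ts1C : forall x, t (s1 x) = s1 (t x)) (ts2C : forall x, t (s2 x) = s2 (t x)).
Hypothesis same_type_orbit : forall x z (j : 'I_3),
  t x = nth x (klein_row x) j -> t z = nth z (klein_row z) j -> z \in klein_orbit x.

Definition klein_type x : 'I_3 := inord (index (t x) (klein_row x)).

Lemma klein_typeE x : t x = nth x (klein_row x) (klein_type x).
Proof. by rewrite inordK ?nth_index // -[3]/(size (klein_row x)) index_mem. Qed.

Lemma klein_type_s1 x : klein_type (s1 x) = klein_type x.
Proof.
rewrite /klein_type.
have -> : klein_row (s1 x) = map s1 (klein_row x) by rewrite /klein_row /= s12C.
by rewrite ts1C index_map //; apply: can_inj s1K.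
Qed.

Lemma klein_type_s2 x : klein_type (s2 x) = klein_type x.
Proof.
rewrite /klein_type.
have -> : klein_row (s2 x) = map s2 (klein_row x) by rewrite /klein_row /= s12C.
by rewrite ts2C index_map //; apply: can_inj s2K.
Qed.

Lemma klein_type_fibre x : [set z | klein_type z == klein_type x] =i klein_orbit x.
Proof.
move=> z; rewrite inE; apply/eqP/idP => [tz | ].
  by apply: (same_type_orbit (j := klein_type x)); [|rewrite -tz]; apply: klein_typeE.
by rewrite !inE => /or4P[] /eqP ->; rewrite ?klein_type_s1 ?klein_type_s2.
Qed.

Lemma card_klein_domain : #|T| \in [:: 0; 4; 8; 12].
Proof.
have fibre4 x : #|[set z | klein_type z == klein_type x]| = 4.
  by rewrite (eq_card (klein_type_fibre x)); apply/card_uniqP/uniq_klein_orbit.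
rewrite (card_uniform_fibres fibre4).
have := max_card (mem (klein_type @: T)); rewrite card_ord.
by case: #|_| => [|[|[|[|]]]].
Qed.

End KleinOrbits.

Local Open Scope ring_scope.

Lemma mulmx_trmx_diag (R : pzSemiRingType) m n (A : 'M[R]_(m, n)) i :
  (A *m A^T) i i = \sum_j A i j ^+ 2.
Proof. by rewrite mxE; apply: eq_bigr => j _; rewrite mxE. Qed.

Lemma anti_amicable_of_sum (R : comPzRingType) n (X Y : 'M[R]_n) (p q : R) :
    X *m X^T = p%:M -> Y *m Y^T = q%:M -> (X + Y) *m (X + Y)^T = (p + q)%:M ->
  X *m Y^T + Y *m X^T = 0.
Proof.
move=> XX YY; rewrite raddfD /= !(mulmxDl, mulmxDr) XX YY raddfD /=.
rewrite [p%:M + _]addrC addrACA -{2}[p%:M + q%:M]add0r => /(addIr (p%:M + q%:M)).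
by rewrite addrC.
Qed.

Lemma mulmx_trmx_cancel (R : comPzRingType) n (P X Y : 'M[R]_n) :
  P^T *m P = 1%:M -> (X *m P^T) *m (Y *m P^T)^T = X *m Y^T.
Proof. by move=> PP; rewrite trmx_mul trmxK mulmxA -(mulmxA X) PP mulmx1. Qed.

Lemma skew_entry (R : zmodType) n (A : 'M[R]_n) i j : A^T = - A -> A j i = - A i j.
Proof. by move/matrixP/(_ i j); rewrite !mxE. Qed.

Lemma sym_entry (R : zmodType) n (A : 'M[R]_n) i j : A^T = A -> A j i = A i j.
Proof. by move/matrixP/(_ i j); rewrite !mxE. Qed.

Lemma skew_diag (R : numDomainType) n (A : 'M[R]_n) i : A^T = - A -> A i i = 0.
Proof.
move=> A_skew; apply/eqP; move/eqP: (skew_entry i i A_skew).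
by rewrite -addr_eq0 -mulr2n mulrn_eq0.
Qed.

Definition nzcol n (P : 'M[int]_n) (i : 'I_n) : 'I_n := odflt i [pick j | P i j != 0].

Section SignedPermutationMatrix.

Variables (n : nat) (P : 'M[int]_n).
Hypothesis P_orth : P *m P^T = 1%:M.

Lemma nzcol_row i : P i (nzcol P i) ^+ 2 = 1 /\ forall j, j != nzcol P i -> P i j = 0.
Proof.
have sq_ge0 (z : int) : 0 <= z ^+ 2 by rewrite sqr_ge0.
have /esym := mulmx_trmx_diag P i; rewrite P_orth mxE eqxx /=.
rewrite /nzcol; case: pickP => [k Pik | P_row0] /=; last first.
  by rewrite big1 // => j _; move/negbFE/eqP: (P_row0 j) => ->; rewrite expr0n.
rewrite (bigD1 k) //=; set S := \sum_(j | _) _ => sum1.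
have S_ge0 : 0 <= S by apply: sumr_ge0 => j _.
have Pik_ge1 : 1 <= P i k ^+ 2 by move: Pik; rewrite expr2; nia.
have S0 : S = 0 by lia.
split=> [|j jk]; first by lia.
by have /eqP := psumr_eq0P (fun j _ => sq_ge0 (P i j)) S0 jk; rewrite sqrf_eq0 => /eqP.
Qed.

Lemma sqr_nzcol i : P i (nzcol P i) ^+ 2 = 1.
Proof. exact: (nzcol_row i).1. Qed.

Lemma nzcol_neq0 i : P i (nzcol P i) != 0.
Proof. by apply/eqP => Pi0; have := sqr_nzcol i; rewrite Pi0 expr0n. Qed.

Lemma nzcolP i j : P i j != 0 -> j = nzcol P i.
Proof. by apply: contraNeq => /(nzcol_row i).2 ->. Qed.

Lemma normr_nzcol i : `|P i (nzcol P i)| = 1.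
Proof.
by apply/eqP; rewrite -(@eqrXn2 _ 2) ?normr_ge0 // real_normK ?num_real ?sqr_nzcol ?expr1n.
Qed.

Lemma mulmx_trr m (X : 'M[int]_(m, n)) i j : (X *m P^T) i j = X i (nzcol P j) * P j (nzcol P j).
Proof.
rewrite mxE (bigD1 (nzcol P j)) //= big1 ?addr0 ?mxE // => k k_neq.
by rewrite mxE (nzcol_row j).2 ?mulr0.
Qed.

Lemma mulmx_trl m (Y : 'M[int]_(m, n)) i j : (P *m Y^T) i j = P i (nzcol P i) * Y j (nzcol P i).
Proof.
rewrite mxE (bigD1 (nzcol P i)) //= big1 ?addr0 ?mxE // => k k_neq.
by rewrite (nzcol_row i).2 ?mul0r.
Qed.

Lemma nzcolK : (forall i j, P i j != 0 -> P j i != 0) -> involutive (nzcol P).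
Proof. by move=> suppC i; apply/esym/nzcolP/suppC/nzcol_neq0. Qed.

Lemma anti_amicable_nzcol (C : 'M[int]_n) i : P *m C^T + C *m P^T = 0 -> C i (nzcol P i) = 0.
Proof.
move/matrixP/(_ i i); rewrite mxE mulmx_trl mulmx_trr mxE => /eqP.
by rewrite mulrC -mulr2n mulrn_eq0 /= mulf_eq0 (negbTE (nzcol_neq0 i)) orbF => /eqP.
Qed.

End SignedPermutationMatrix.

Section SkewSymmetricSignedPermutation.

Variables (n : nat) (P : 'M[int]_n).
Hypothesis P_orth : P *m P^T = 1%:M.

Lemma nzcol_skew_neq : P^T = - P -> forall i, nzcol P i != i.
Proof.
by move=> P_skew i; apply: contraTneq (nzcol_neq0 P_orth i) => ->; rewrite skew_diag ?eqxx.
Qed.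

Lemma nzcol_skewK : P^T = - P -> involutive (nzcol P).
Proof. by move=> P_skew; apply: nzcolK => // i j; rewrite (skew_entry j i P_skew) oppr_eq0. Qed.

Lemma nzcol_symK : P^T = P -> involutive (nzcol P).
Proof. by move=> P_sym; apply: nzcolK => // i j; rewrite (sym_entry j i P_sym). Qed.

End SkewSymmetricSignedPermutation.

Lemma nzcol_commute n (P Q : 'M[int]_n) (e : int) :
    P *m P^T = 1%:M -> Q *m Q^T = 1%:M ->
    involutive (nzcol P) -> involutive (nzcol Q) -> P *m Q^T = e *: (Q *m P^T) ->
  forall i, nzcol P (nzcol Q i) = nzcol Q (nzcol P i).
Proof.
move=> P_orth Q_orth PK QK PQ i.
have Qw : Q (nzcol Q (nzcol P i)) (nzcol P i) != 0 by rewrite -{2}(QK (nzcol P i)) nzcol_neq0.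
have : (P *m Q^T) i (nzcol Q (nzcol P i)) != 0 by rewrite mulmx_trl // mulf_neq0 ?nzcol_neq0.
rewrite PQ mxE mulmx_trl // !mulf_eq0 !negb_or => /and3P[_ _ /(nzcolP P_orth) ->].
by rewrite PK.
Qed.

Lemma mulmx1_trmx1 n : (1%:M : 'M[int]_n) *m 1%:M^T = 1%:M.
Proof. by rewrite trmx1 mulmx1. Qed.

Lemma nzcol1 n (i : 'I_n) : nzcol 1%:M i = i.
Proof. by apply/esym/(nzcolP (mulmx1_trmx1 n)); rewrite mxE eqxx oner_eq0. Qed.

Lemma anti_amicable_sign_ratio n (A B C : 'M[int]_n) y z :
    A *m A^T = 1%:M -> B *m B^T = 1%:M ->
    A *m C^T + C *m A^T = 0 -> B *m C^T + C *m B^T = 0 ->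
    nzcol B y = nzcol A y -> nzcol B z = nzcol A z -> C z (nzcol A y) != 0 ->
  B y (nzcol A y) * A y (nzcol A y) = B z (nzcol A z) * A z (nzcol A z).
Proof.
move=> A_orth B_orth AC BC By Bz Czy.
have /matrixP/(_ y z) := AC; rewrite mxE mulmx_trl // mulmx_trr // mxE.
have /matrixP/(_ y z) := BC; rewrite mxE mulmx_trl // mulmx_trr // mxE By Bz.
have := sqr_nzcol A_orth y; have := sqr_nzcol A_orth z.
move: Czy; set u := C z _; set v := C y _; set ay := A y _; set az := A z _.
set by_ := B y _; set bz := B z _ => u_neq0 az2 ay2 BCyz ACyz.
have : u * (by_ * ay - bz * az) = 0.
  (* eliminate [v] between the two entry equations, using [ay ^+ 2 = az ^+ 2 = 1] *)
  have -> : u * (by_ * ay - bz * az) = ay * (by_ * u + v * bz) - bz * az * ay * (ay * u + v * az)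
      + bz * az * u * (ay ^+ 2 - 1) + bz * ay * v * (az ^+ 2 - 1) by ring.
  by rewrite BCyz ACyz ay2 az2 !subrr !mulr0 subr0 !addr0.
by move/eqP; rewrite mulf_eq0 (negbTE u_neq0) subr_eq0 => /eqP.
Qed.

Lemma card_row_support n (C : 'M[int]_n) i :
  (forall j, `|C i j| <= 1) -> #|[set j | C i j != 0]|%:Z = (C *m C^T) i i.
Proof.
move=> C_le1; rewrite mulmx_trmx_diag (bigID (fun j => C i j != 0)) /=.
rewrite [X in _ + X]big1 => [|j /negbNE/eqP ->]; last by rewrite expr0n.
rewrite addr0 -natz -sumr_const; apply: eq_big => j; rewrite inE // => Cij.
by move: (C i j) (C_le1 j) Cij => z z_le1 /eqP z_neq0; rewrite expr2; nia.
Qed.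

Lemma evmxD n (V : Type) (x y : V -> int) (D : 'M[entry V]_n) :
  evmx (fun v => x v + y v) D = evmx x D + evmx y D.
Proof.
by apply/matrixP => i j; rewrite !mxE; case: (D i j) => [[[] v]|] /=; rewrite ?addr0 ?opprD.
Qed.

Lemma evmx_join n (V W : Type) (A : 'M[entry V]_n) (B : 'M[entry W]_n) (x : V + W -> int) :
    hadamard_zero A B ->
  evmx x (mx_join A B) = evmx (fun v => x (inl v)) A + evmx (fun w => x (inr w)) B.
Proof.
move=> AB; apply/matrixP => i j; rewrite !mxE.
by case: (AB i j) => ->; [case: (B i j) => [[[] w]|] | case: (A i j) => [[[] v]|]];
  rewrite /= ?add0r ?addr0.
Qed.

Lemma normr_evmx_le1 n (V : Type) (x : V -> int) (D : 'M[entry V]_n) i j :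
  (forall v, `|x v| <= 1) -> `|evmx x D i j| <= 1.
Proof. by move=> x_le1; rewrite mxE; case: (D i j) => [[[] v]|] //=; rewrite ?normrN. Qed.

Definition unitv (V : finType) (i : V) (v : V) : int := (v == i)%:R.

Section OrthogonalDesign.

Variables (n : nat) (V : finType) (c : V -> int) (M : 'M[entry V]_n).
Hypothesis M_OD : is_OD c M.

Lemma is_OD_unitv i : evmx (unitv i) M *m (evmx (unitv i) M)^T = (c i)%:M.
Proof.
rewrite M_OD (bigD1 i) //= big1 ?addr0 => [|v /negbTE vi].
  by rewrite /unitv eqxx expr1n mulr1.
by rewrite /unitv vi mulr0n expr0n mulr0.
Qed.

Lemma is_OD_anti_amicable i j : i != j ->
  evmx (unitv i) M *m (evmx (unitv j) M)^T + evmx (unitv j) M *m (evmx (unitv i) M)^T = 0.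
Proof.
move=> ij; apply: (anti_amicable_of_sum (is_OD_unitv i) (is_OD_unitv j)).
have ji : j != i by rewrite eq_sym.
rewrite -evmxD M_OD (bigD1 i) // (bigD1 j) //= big1 ?addr0 => [|v /andP[vi vj]].
  by rewrite /unitv !eqxx (negbTE ij) (negbTE ji) addr0 add0r expr1n !mulr1.
by rewrite /unitv (negbTE vi) (negbTE vj) addr0 mulr0n expr0n mulr0.
Qed.

End OrthogonalDesign.

Lemma is_OD_join_anti_amicable n (V W : finType) (a : V -> int) (u : W -> int)
    (M : 'M[entry V]_n) (N : 'M[entry W]_n) :
    hadamard_zero M N -> is_OD a M -> is_OD u N -> is_OD (type_join a u) (mx_join M N) ->
  forall x y, evmx x M *m (evmx y N)^T + evmx y N *m (evmx x M)^T = 0.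
Proof.
move=> MN M_OD N_OD MN_OD x y; apply: (anti_amicable_of_sum (M_OD x) (N_OD y)).
have := MN_OD (type_join x y).
rewrite evmx_join // => ->.
by rewrite big_sumType.
Qed.

Section NormalizedDesign.

Variables (n : nat) (a1 a2 b c : 'M[int]_n).
Hypotheses (a1_orth : a1 *m a1^T = 1%:M) (a2_orth : a2 *m a2^T = 1%:M).
Hypothesis b_orth : b *m b^T = 1%:M.
Hypotheses (a1_skew : a1^T = - a1) (a2_skew : a2^T = - a2).
Hypotheses (b_sym : b^T = b) (c_skew : c^T = - c).
Hypothesis a12_anti : a1 *m a2^T + a2 *m a1^T = 0.
Hypotheses (a1b_amic : a1 *m b^T = b *m a1^T) (a2b_amic : a2 *m b^T = b *m a2^T).
Hypotheses (a1c_anti : a1 *m c^T + c *m a1^T = 0) (a2c_anti : a2 *m c^T + c *m a2^T = 0).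
Hypothesis bc_anti : b *m c^T + c *m b^T = 0.
Hypothesis c_norm : c *m c^T = (n%:Z - 3)%:M.
Hypothesis c_le1 : forall i j, `|c i j| <= 1.

Local Notation s1 := (nzcol a1).
Local Notation s2 := (nzcol a2).
Local Notation t := (nzcol b).

Let s1K : involutive s1 := nzcol_skewK a1_orth a1_skew.
Let s2K : involutive s2 := nzcol_skewK a2_orth a2_skew.
Let tK : involutive t := nzcol_symK b_orth b_sym.

Lemma nzcol_amicableC (a : 'M[int]_n) :
  a *m a^T = 1%:M -> a^T = - a -> a *m b^T = b *m a^T -> forall x, t (nzcol a x) = nzcol a (t x).
Proof.
move=> a_orth a_skew ab x; apply/esym/(nzcol_commute (e := 1)) => //.
  exact: nzcol_skewK.
by rewrite scale1r.
Qed.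

Let ts1C : forall x, t (s1 x) = s1 (t x) := nzcol_amicableC a1_orth a1_skew a1b_amic.
Let ts2C : forall x, t (s2 x) = s2 (t x) := nzcol_amicableC a2_orth a2_skew a2b_amic.

Lemma s12C x : s1 (s2 x) = s2 (s1 x).
Proof.
apply: (nzcol_commute (e := -1)) => //.
by rewrite scaleN1r; apply/eqP; rewrite -addr_eq0 a12_anti.
Qed.

Lemma s12_neq x : s1 x != s2 x.
Proof.
by apply: contraTneq (nzcol_neq0 a2_orth x) => <-; rewrite (anti_amicable_nzcol a1_orth).
Qed.

Lemma c_support x y : (c x y != 0) = (y \notin klein_row s1 s2 x).
Proof.
have row0 : [set y | y \in klein_row s1 s2 x] \subset [set y | c x y == 0].
  apply/subsetP => w; rewrite !inE => /or3P[]/eqP->.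
  - by rewrite skew_diag.
  - by rewrite (anti_amicable_nzcol a1_orth).
  - by rewrite (anti_amicable_nzcol a2_orth).
have card_row : #|[set y | y \in klein_row s1 s2 x]| = 3%N.
  rewrite cardsE; apply/card_uniqP/uniq_klein_row; last exact: s12_neq.
    exact: nzcol_skew_neq a1_orth a1_skew.
  exact: nzcol_skew_neq a2_orth a2_skew.
have card_supp : #|[set y | c x y != 0]|%:Z = n%:Z - 3.
  by rewrite card_row_support // c_norm mxE eqxx mulr1n.
suff /setP/(_ y) : [set y | c x y == 0] = [set y | y \in klein_row s1 s2 x].
  by rewrite !inE => ->.
apply/esym/eqP; rewrite eqEcard row0 card_row.
have := cardsC [set y | c x y == 0]; rewrite card_ord.
have -> : ~: [set y | c x y == 0] = [set y | c x y != 0] by apply/setP => w; rewrite !inE.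
by move: card_supp; lia.
Qed.

Lemma t_row x : t x \in klein_row s1 s2 x.
Proof. by rewrite -[_ \in _]negbK -c_support (anti_amicable_nzcol b_orth) ?eqxx. Qed.

Lemma fixed_type_false x z : t x = x -> t z = z -> c z x != 0 -> c z (s1 x) != 0 -> False.
Proof.
move=> tx tz czx czs1x.
have one_anti : 1%:M *m c^T + c *m 1%:M^T = 0 by rewrite trmx1 mul1mx mulmx1 c_skew addNr.
have diag_eq y : t y = y -> c z y != 0 -> b y y = b z z.
  move=> ty czy.
  have := anti_amicable_sign_ratio (y := y) (z := z) (mulmx1_trmx1 n) b_orth one_anti bc_anti.
  by rewrite !nzcol1 !mxE !eqxx !mulr1; apply.
have t_s1x : t (s1 x) = s1 x by rewrite ts1C tx.
have /matrixP/(_ x (s1 x)) := a1b_amic.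
rewrite mulmx_trl // mulmx_trl // tx [a1 (s1 x) x](skew_entry _ _ a1_skew) mulrN.
rewrite (diag_eq _ t_s1x czs1x) (diag_eq _ tx czx) mulrC => /eqP.
rewrite -addr_eq0 -mulr2n mulrn_eq0 /= mulf_eq0 (negbTE (nzcol_neq0 a1_orth x)) orbF.
by rewrite -{2}tz (negbTE (nzcol_neq0 b_orth z)).
Qed.

Lemma skew_type_false (a : 'M[int]_n) x z :
    a *m a^T = 1%:M -> a^T = - a -> a *m b^T = b *m a^T -> a *m c^T + c *m a^T = 0 ->
    t x = nzcol a x -> t z = nzcol a z -> c z x != 0 -> c z (nzcol a x) != 0 -> False.
Proof.
move=> a_orth a_skew ab ac tx tz czx czsx; have aK := nzcol_skewK a_orth a_skew.
have tsx : t (nzcol a x) = nzcol a (nzcol a x) by rewrite nzcol_amicableC // tx.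
have := anti_amicable_sign_ratio a_orth b_orth ac bc_anti tsx tz; rewrite aK => /(_ czx).
rewrite -(anti_amicable_sign_ratio a_orth b_orth ac bc_anti tx tz czsx).
rewrite (sym_entry _ _ b_sym) (skew_entry _ _ a_skew) mulrN => /eqP.
rewrite eq_sym -addr_eq0 -mulr2n mulrn_eq0 /= mulf_eq0 (negbTE (nzcol_neq0 a_orth x)) orbF.
by rewrite -tx (negbTE (nzcol_neq0 b_orth x)).
Qed.

Lemma same_type_orbit x z (j : 'I_3) :
    t x = nth x (klein_row s1 s2 x) j -> t z = nth z (klein_row s1 s2 z) j ->
  z \in klein_orbit s1 s2 x.
Proof.
move=> tx tz; apply/negPn/negP => z_out.
have cz y : y \in klein_row s1 s2 x -> c z y != 0.
  by move=> yx; rewrite c_support; apply: contra z_out; apply: klein_row_orbit yx => //; apply: s12C.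
have [czx czs1x czs2x] : [/\ c z x != 0, c z (s1 x) != 0 & c z (s2 x) != 0].
  by split; apply: cz; rewrite !inE eqxx ?orbT.
case: j tx tz => [[|[|[|//]]] _] /= tx tz.
- exact: fixed_type_false tx tz czx czs1x.
- exact: skew_type_false a1_orth a1_skew a1b_amic a1c_anti tx tz czx czs1x.
- exact: skew_type_false a2_orth a2_skew a2b_amic a2c_anti tx tz czx czs2x.
Qed.

Lemma normalized_design_order : n \in [:: 0; 4; 8; 12]%N.
Proof.
rewrite -[n]card_ord; apply: (card_klein_domain s1K s2K s12C _ _ s12_neq t_row ts1C ts2C).
- exact: nzcol_skew_neq a1_orth a1_skew.
- exact: nzcol_skew_neq a2_orth a2_skew.
- exact: same_type_orbit.
Qed.

End NormalizedDesign.

Lemma design_order n (A : 'I_3 -> 'M[int]_n) (B C : 'M[int]_n) :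
    (forall i, A i *m (A i)^T = 1%:M) -> B *m B^T = 1%:M ->
    (forall i j, i != j -> A i *m (A j)^T + A j *m (A i)^T = 0) ->
    (forall i, A i *m B^T = B *m (A i)^T) ->
    (forall i, A i *m C^T + C *m (A i)^T = 0) -> B *m C^T + C *m B^T = 0 ->
    C *m C^T = (n%:Z - 3)%:M -> (forall i j, `|C i j| <= 1) ->
  n \in [:: 0; 4; 8; 12]%N.
Proof.
move=> A_orth B_orth AA AB AC BC C_norm C_le1.
pose P := A ord0; pose i1 : 'I_3 := Ordinal (isT : 1 < 3)%N.
pose i2 : 'I_3 := Ordinal (isT : 2 < 3)%N.
have P_orthC : P^T *m P = 1%:M := mulmx1C (A_orth ord0).
have skew_normal X : X *m P^T + P *m X^T = 0 -> (X *m P^T)^T = - (X *m P^T).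
  by move=> XP; rewrite trmx_mul trmxK; apply/eqP; rewrite -addr_eq0 addrC XP.
apply: (@normalized_design_order n (A i1 *m P^T) (A i2 *m P^T) (B *m P^T) (C *m P^T));
  rewrite ?mulmx_trmx_cancel //.
- exact: skew_normal (AA i1 ord0 isT).
- exact: skew_normal (AA i2 ord0 isT).
- by rewrite trmx_mul trmxK AB.
- by apply: skew_normal; rewrite addrC; apply: AC.
- exact: AA.
- by move=> x y; rewrite (mulmx_trr (A_orth ord0)) normrM (normr_nzcol (A_orth ord0)) mulr1.
Qed.

Theorem theorem2p6 (n : nat) :
  (0 < n)%N -> n \notin [:: 4%N; 8%N; 12%N] ->
  ~ exists (M1 : 'M[entry 'I_3]_n) (M2 : 'M[entry 'I_3]_n) (N : 'M[entry 'I_1]_n),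
      is_PD (fun _ : 'I_3 => 1) (fun _ : 'I_3 => 1) (fun _ : 'I_1 => n%:Z - 3) M1 M2 N.
Proof.
move=> n_gt0 n_out [M1 [M2 [N [M1_OD [M2_OD [N_OD [M1N [M2N [M1N_OD [M2N_OD M12]]]]]]]]]].
have : n \in [:: 0; 4; 8; 12]%N.
  apply: (@design_order n (fun i => evmx (unitv i) M1) (evmx (unitv ord0) M2)
                          (evmx (fun _ => 1) N)).
  - by move=> i; rewrite (is_OD_unitv M1_OD).
  - by rewrite (is_OD_unitv M2_OD).
  - exact: is_OD_anti_amicable M1_OD.
  - by move=> i; apply: M12.
  - by move=> i; apply: (is_OD_join_anti_amicable M1N M1_OD N_OD M1N_OD _ (fun _ => 1)).
  - exact: (is_OD_join_anti_amicable M2N M2_OD N_OD M2N_OD _ (fun _ => 1)).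
  - by rewrite N_OD big_ord1 expr1n mulr1.
  - by move=> i j; apply: normr_evmx_le1.
by rewrite !inE => /or4P[]/eqP n_eq; move: n_gt0 n_out; rewrite n_eq.
Qed.
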